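(* Let $K,L,T$ be positive integers and $(\alpha,\beta)\in\mathcal{A}(K,L,T)$. Then $KL+K+L+2T-1-T\min\{K,L,T\}\le\operatorname{N}(\alpha,\beta)$. Consequently, for $\alpha_{\mathrm p}=(0,1,\ldots,K-1)$, $\alpha_{\mathrm s}=(KL)$, $\beta_{\mathrm p}=(0,K,\ldots,K(L-1))$ and $\beta_{\mathrm s}=(KL)$, the degree table $(\alpha_{\mathrm p},\alpha_{\mathrm s},\beta_{\mathrm p},\beta_{\mathrm s})\in\mathcal{A}(K,L,1)$ has the minimum value of $\operatorname{N}$ among all elements of $\mathcal{A}(K,L,1)$.
   Context: A degree table with parameters $K,L,T$ is a tuple $(\alpha_{\mathrm p},\alpha_{\mathrm s},\beta_{\mathrm p},\beta_{\mathrm s})$ of nonnegative integer vectors of lengths $K,T,L,T$ such that, with $\alpha=(\alpha_{\mathrm p}\mid\alpha_{\mathrm s})$, $\beta=(\beta_{\mathrm p}\mid\beta_{\mathrm s})$ (concatenations): (i) entries of $\alpha$ are distinct; (ii) entries of $\beta$ are distinct; (iii) for every integer $n\in\operatorname{Set}(\alpha_{\mathrm p})+\operatorname{Set}(\beta_{\mathrm p})$ there is a unique $i\in\operatorname{Set}(\alpha)$ and a unique $j\in\operatorname{Set}(\beta)$ with $n=i+j$. $\operatorname{Set}(v)$ is the set of entries of $v$, $A+B=\{a+b:a\in A,b\in B\}$, $\mathcal{A}(K,L,T)$ is the set of degree tables, and $\operatorname{N}(\alpha,\beta)=|\operatorname{Set}(\alpha)+\operatorname{Set}(\beta)|$. 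*)

From mathcomp Require Import all_boot.
Set Implicit Arguments. Unset Strict Implicit. Unset Printing Implicit Defensive.

(* Vectors of nonnegative integers are represented as seq nat; Set(v) is
   membership in the sequence. *)

Definition sumset (A B : seq nat) : seq nat := [seq a + b | a <- A, b <- B].

Definition Nsum (alpha beta : seq nat) : nat := size (undup (sumset alpha beta)).

Definition degree_table (K L T : nat) (ap a_s bp bs : seq nat) : Prop :=
  size ap = K /\ size a_s = T /\ size bp = L /\ size bs = T /\
  uniq (ap ++ a_s) /\ uniq (bp ++ bs) /\
      (forall n, n \in sumset ap bp ->
        exists i j, [/\ i \in ap ++ a_s, j \in bp ++ bs, n = i + j &
          forall i' j', i' \in ap ++ a_s -> j' \in bp ++ bs -> n = i' + j' ->
            i' = i /\ j' = j]).

From mathcomp Require Import all_boot zify.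
Set Implicit Arguments. Unset Strict Implicit.

(* The K L primary sums a + b (a in alpha_p, b in beta_p) are pairwise distinct
   and, by unique representability, differ from every sum that involves a
   secondary entry.  Secondary sums are counted in three ways.  Over the naturals
   |X + Y| >= |X| + |Y| - 1, which bounds |alpha_s + beta| and |alpha + beta_s|.
   For x in alpha_s and y in beta_s, the sums x + beta_p and (x :: alpha_p) + y
   share at most one value, since a1 + y = x + b1 and a2 + y = x + b2 force
   a1 + b2 = a2 + b1 with a1, a2 primary.  Whichever of K, L, T is smallest, one
   of the resulting bounds dominates K L + K + L + 2T - 1 - T min(K, L, T); for
   T = 1 this is K L + K + L, which the standard table attains. *)

Lemma count_le1 (T : eqType) (p : pred T) (s : seq T) : uniq s ->
  {in s &, forall x y, p x -> p y -> x = y} -> count p s <= 1.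
Proof.
move=> s_uniq p_single; rewrite -size_filter.
case E: (filter p s) => [//|x r].
have xr_sub : {subset x :: r <= [:: x]}.
  have : x \in filter p s by rewrite E mem_head.
  rewrite mem_filter => /andP[px xs] y; rewrite -E mem_filter inE => /andP[py ys].
  by apply/eqP; apply: p_single.
by apply: uniq_leq_size xr_sub; rewrite -E filter_uniq.
Qed.

Lemma size_undup_cat_overlap1 (T : eqType) (s1 s2 : seq T) : uniq s1 -> uniq s2 ->
  {in s1 &, forall x y, x \in s2 -> y \in s2 -> x = y} ->
  size s1 + size s2 <= (size (undup (s1 ++ s2))).+1.
Proof.
move=> s1_uniq s2_uniq overlap.
rewrite undup_cat !undup_id // size_cat size_filter -addSn leq_add2r.
rewrite -(count_predC (mem s2) s1) addnC -addn1 leq_add2l.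
exact: count_le1.
Qed.

Lemma leq_size_sumset (X Y : seq nat) x y : x \in X -> y \in Y -> uniq X -> uniq Y ->
  size X + size Y <= (size (undup (sumset X Y))).+1.
Proof.
move=> xX yY X_uniq Y_uniq.
have [x0 x0X x0_min] := @ex_minnP (mem X) (ex_intro _ x xX).
have [ym ymY ym_max] := @ex_maxnP (mem Y) (\max_(y <- Y) y) (ex_intro _ y yY)
  (fun y yY => leq_bigmax_seq (F := id) y yY isT).
(* With x0 = min X and ym = max Y, the sums x0 + Y and X + ym meet only in x0 + ym. *)
pose s1 := [seq x0 + y | y <- Y]; pose s2 := [seq x + ym | x <- X].
have -> : size X + size Y = size s1 + size s2 by rewrite !size_map addnC.
apply: leq_trans (size_undup_cat_overlap1 _ _ _) _.
- by rewrite map_inj_uniq //; apply: addnI.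
- by rewrite map_inj_uniq //; apply: addIn.
- have corner z : z \in s1 -> z \in s2 -> z = x0 + ym.
    move=> /mapP[v vY ->] /mapP[u uX].
    by have := x0_min u uX; have := ym_max v vY; lia.
  by move=> z1 z2 z1s1 z2s1 z1s2 z2s2; rewrite (corner z1) // (corner z2).
rewrite ltnS; apply: uniq_leq_size (undup_uniq _) _ => z.
rewrite !mem_undup mem_cat => /orP[] /mapP[u uS ->]; exact: allpairs_f.
Qed.

Lemma sumsetS (A A' B B' : seq nat) : {subset A <= A'} -> {subset B <= B'} ->
  {subset sumset A B <= sumset A' B'}.
Proof.
by move=> AA' BB' _ /allpairsP[[a b] [/= aA bB ->]]; rewrite allpairs_f ?AA' ?BB'.
Qed.

Lemma mem_cat_l (T : eqType) (s1 s2 : seq T) x : x \in s1 -> x \in s1 ++ s2.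
Proof. by rewrite mem_cat => ->. Qed.

Lemma mem_cat_r (T : eqType) (s1 s2 : seq T) x : x \in s2 -> x \in s1 ++ s2.
Proof. by rewrite mem_cat orbC => ->. Qed.

Arguments mem_cat_l {T s1 s2} [x].
Arguments mem_cat_r {T s1 s2} [x].

Section DegreeTable.

Variables ap a_s bp bs : seq nat.
Local Notation alpha := (ap ++ a_s).
Local Notation beta := (bp ++ bs).

Hypothesis alpha_uniq : uniq alpha.
Hypothesis beta_uniq : uniq beta.
Hypothesis unique_rep : forall n, n \in sumset ap bp ->
  exists i j, [/\ i \in alpha, j \in beta, n = i + j &
    forall i' j', i' \in alpha -> j' \in beta -> n = i' + j' -> i' = i /\ j' = j].

Lemma primary_sum_unique a b i j : a \in ap -> b \in bp -> i \in alpha -> j \in beta ->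
  a + b = i + j -> i = a /\ j = b.
Proof.
move=> aP bP iA jB ab_ij.
have [i0 [j0 [_ _ _ rep0]]] := unique_rep (allpairs_f addn aP bP).
have [-> ->] := rep0 a b (mem_cat_l aP) (mem_cat_l bP) erefl.
exact: rep0.
Qed.

Lemma sumset_primary_uniq : uniq (sumset ap bp).
Proof.
move: (alpha_uniq) (beta_uniq); rewrite !cat_uniq => /and3P[ap_uniq _ _] /and3P[bp_uniq _ _].
apply: allpairs_uniq => // -[a b] [a' b'] /allpairsP[[? ?] /= [aP bP [-> ->]]].
move=> /allpairsP[[? ?] /= [a'P b'P [-> ->]]] /= ab_ab'.
by have [-> ->] := primary_sum_unique aP bP (mem_cat_l a'P) (mem_cat_l b'P) ab_ab'.
Qed.

Lemma sumset_secondary_notin i j : i \in alpha -> j \in beta ->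
  (i \in a_s) || (j \in bs) -> i + j \notin sumset ap bp.
Proof.
move=> iA jB ij_sec; apply/allpairsP => -[[a b] [/= aP bP ij_ab]].
have [ia jb] := primary_sum_unique aP bP iA jB (esym ij_ab).
move: (alpha_uniq) (beta_uniq); rewrite !cat_uniq.
move=> /and3P[_ /hasPn a_s_new _] /and3P[_ /hasPn bs_new _].
by case/orP: ij_sec => [/a_s_new | /bs_new]; rewrite ?ia ?jb ?aP ?bP.
Qed.

Lemma Nsum_ge_primary_add (W : seq nat) : {subset W <= sumset alpha beta} ->
  {in W, forall w, w \notin sumset ap bp} ->
  size ap * size bp + size (undup W) <= Nsum alpha beta.
Proof.
move=> W_sub W_new; rewrite -(size_allpairs addn) -size_cat.
apply: uniq_leq_size => [|z]; last first.
  by rewrite mem_cat mem_undup mem_undup => /orP[/(sumsetS mem_cat_l mem_cat_l)|/W_sub].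
rewrite cat_uniq sumset_primary_uniq undup_uniq andbT /=.
by apply/hasPn => w; rewrite mem_undup => /W_new.
Qed.

Lemma Nsum_ge_secondary_alpha x y : x \in a_s -> y \in beta ->
  size ap * size bp + size a_s + size beta <= (Nsum alpha beta).+1.
Proof.
move=> xS yB; rewrite -addnA.
have a_s_uniq : uniq a_s by move: alpha_uniq; rewrite cat_uniq => /and3P[].
apply: leq_trans (_ : _ <= size ap * size bp + (size (undup (sumset a_s beta))).+1) _.
  by rewrite leq_add2l (leq_size_sumset xS yB).
rewrite addnS ltnS; apply: Nsum_ge_primary_add; first exact: sumsetS mem_cat_r (fun _ => id).
move=> _ /allpairsP[[i j] [/= iS jB ->]].
by rewrite sumset_secondary_notin ?(mem_cat_r iS) ?iS.
Qed.

Lemma Nsum_ge_secondary_beta x y : x \in alpha -> y \in bs ->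
  size ap * size bp + size alpha + size bs <= (Nsum alpha beta).+1.
Proof.
move=> xA yS; rewrite -addnA.
have bs_uniq : uniq bs by move: beta_uniq; rewrite cat_uniq => /and3P[].
apply: leq_trans (_ : _ <= size ap * size bp + (size (undup (sumset alpha bs))).+1) _.
  by rewrite leq_add2l (leq_size_sumset xA yS).
rewrite addnS ltnS; apply: Nsum_ge_primary_add; first exact: sumsetS (fun _ => id) mem_cat_r.
move=> _ /allpairsP[[i j] [/= iA jS ->]].
by rewrite sumset_secondary_notin ?(mem_cat_r jS) ?jS ?orbT.
Qed.

Lemma Nsum_ge_cross x y : x \in a_s -> y \in bs ->
  size ap * size bp + size ap + size bp <= Nsum alpha beta.
Proof.
move=> xS yS.
move: (alpha_uniq) (beta_uniq); rewrite !cat_uniq.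
move=> /and3P[ap_uniq /hasPn a_s_new _] /and3P[bp_uniq /hasPn bs_new _].
have xA : x \in alpha by rewrite mem_cat_r.
have yB : y \in beta by rewrite mem_cat_r.
have s2_alpha v : v \in x :: ap -> v \in alpha by rewrite inE => /predU1P[->|/mem_cat_l].
pose s1 := [seq x + b | b <- bp]; pose s2 := [seq a + y | a <- x :: ap].
have s1_uniq : uniq s1 by rewrite map_inj_uniq //; apply: addnI.
have s2_uniq : uniq s2.
  by rewrite map_inj_uniq /= ?ap_uniq ?a_s_new ?andbT //; apply: addIn.
have overlap_primary z : z \in s1 -> z \in s2 -> exists2 a, a \in ap & z = a + y.
  move=> /mapP[b bP ->] /mapP[a]; rewrite inE => /predU1P[-> /eqP|aP ->]; last by exists a.
  by rewrite eqn_add2l => /eqP yb; move: (bs_new y yS); rewrite -yb bP.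
have overlap1 : {in s1 &, forall z1 z2, z1 \in s2 -> z2 \in s2 -> z1 = z2}.
  move=> z1 z2 z1s1 z2s1 z1s2 z2s2.
  have [a1 a1P z1E] := overlap_primary z1 z1s1 z1s2.
  have [a2 a2P z2E] := overlap_primary z2 z2s1 z2s2.
  move: z1s1 z2s1 => /mapP[b1 b1P z1E'] /mapP[b2 b2P z2E'].
  have [a2a1 _] : a2 = a1 /\ b1 = b2.
    apply: primary_sum_unique a1P b2P (mem_cat_l a2P) (mem_cat_l b1P) _.
    by move: z1E z2E z1E' z2E'; clear; lia.
  by rewrite z1E z2E a2a1.
have := size_undup_cat_overlap1 s1_uniq s2_uniq overlap1.
rewrite !size_map /= addnS ltnS addnC => W_size.
apply: leq_trans (Nsum_ge_primary_add (W := s1 ++ s2) _ _); first by rewrite -addnA leq_add2l.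
  move=> z; rewrite mem_cat => /orP[] /mapP[v vP ->].
    by rewrite allpairs_f ?(mem_cat_l vP).
  by rewrite allpairs_f ?(s2_alpha v vP).
move=> z; rewrite mem_cat => /orP[] /mapP[v vP ->].
  by apply: sumset_secondary_notin; rewrite ?(mem_cat_l vP) ?xS.
by apply: sumset_secondary_notin; rewrite ?(s2_alpha v vP) ?yS ?orbT.
Qed.

End DegreeTable.

Lemma Nsum_degree_table_lb K L T ap a_s bp bs : 0 < T -> degree_table K L T ap a_s bp bs ->
  K * L + K + L + 2 * T - 1 - T * minn K (minn L T) <= Nsum (ap ++ a_s) (bp ++ bs).
Proof.
move=> T_gt0 [ap_size [a_s_size [bp_size [bs_size [alpha_uniq [beta_uniq unique_rep]]]]]].
have xS : nth 0 a_s 0 \in a_s by rewrite mem_nth ?a_s_size.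
have yS : nth 0 bs 0 \in bs by rewrite mem_nth ?bs_size.
have := Nsum_ge_secondary_alpha alpha_uniq beta_uniq unique_rep xS (mem_cat_r yS).
have := Nsum_ge_secondary_beta alpha_uniq beta_uniq unique_rep (mem_cat_r xS) yS.
have := Nsum_ge_cross alpha_uniq beta_uniq unique_rep xS yS.
rewrite !size_cat ap_size a_s_size bp_size bs_size.
move: (Nsum _ _) => N cross sec_beta sec_alpha.
have K_TK : K <= T * K by rewrite leq_pmull.
have L_TL : L <= T * L by rewrite leq_pmull.
have T_TT : 2 * T <= T * T + 1 by nia.
have [->|->|->] : [\/ minn K (minn L T) = K, minn K (minn L T) = L | minn K (minn L T) = T].
  by rewrite /minn; case: ltnP; case: ltnP; case: ltnP; constructor.
all: lia.
Qed.

Lemma add_mul_digits_inj K a b i j : a < K -> b < K ->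
  a + K * i = b + K * j -> a = b /\ i = j.
Proof.
move=> aK bK e.
have ab : a = b.
  move/(congr1 (modn^~ K)): e.
  by rewrite !(addnC _ (K * _)) !(mulnC K) !modnMDl !modn_small.
split=> //; move: e; rewrite ab => /addnI /eqP.
by rewrite eqn_mul2l => /orP[/eqP K0|/eqP//]; rewrite K0 in aK.
Qed.

Lemma standard_degree_table K L : 0 < K -> 0 < L ->
  degree_table K L 1 (iota 0 K) [:: K * L] [seq K * i | i <- iota 0 L] [:: K * L].
Proof.
move=> K_gt0 L_gt0.
have mulK_inj : injective (muln K).
  by move=> i j /eqP; rewrite eqn_mul2l eqn0Ngt K_gt0 => /eqP.
rewrite /degree_table size_iota size_map size_iota; do 5 split=> //.
  by rewrite cat_uniq iota_uniq /= mem_iota orbF -leqNgt leq_pmulr.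
split.
  rewrite cat_uniq map_inj_uniq // iota_uniq /= andbT orbF.
  by apply/mapP => -[i]; rewrite mem_iota => /andP[_ iL] /mulK_inj iE; rewrite iE ltnn in iL.
move=> n /allpairsP[[a _] [/= + /mapP[j + ->] ->]]; rewrite !mem_iota /= => aK jL.
exists a, (K * j); split; rewrite ?mem_cat ?mem_iota ?aK ?map_f ?mem_iota ?jL //.
have KL_gt : a + K * j < K * L by nia.
move=> i' j'; rewrite !mem_cat mem_iota !inE /= add0n.
move=> /orP[i'K|/eqP->] /orP[/mapP[k _ ->]|/eqP->] e; try lia.
by have [-> ->] := add_mul_digits_inj aK i'K e.
Qed.

Lemma Nsum_standard_table K L : 0 < K -> 0 < L ->
  Nsum (iota 0 K ++ [:: K * L]) ([seq K * i | i <- iota 0 L] ++ [:: K * L]) <= K * L + K + L.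
Proof.
move=> K_gt0 L_gt0.
pose cover := iota 0 (K * L + K) ++ [seq K * L + K * j | j <- iota 1 L].
have -> : K * L + K + L = size cover by rewrite size_cat size_map !size_iota.
apply: uniq_leq_size (undup_uniq _) _ => n.
rewrite mem_undup => /allpairsP[[a b] [/=]]; rewrite !mem_cat !mem_iota !inE /=.
move=> /orP[aK|/eqP->] /orP[/mapP[j + ->]|/eqP->] ->; rewrite ?mem_iota.
- by move=> jL; apply/orP; left; nia.
- by apply/orP; left; lia.
- case: j => [|j] jL; apply/orP; [left; lia | right; apply: map_f; rewrite mem_iota; lia].
by apply/orP; right; apply: map_f; rewrite mem_iota; lia.
Qed.

Theorem theorem5 (K L : nat) (hK : 0 < K) (hL : 0 < L) :
  (forall (T : nat) (ap a_s bp bs : seq nat), 0 < T ->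
     degree_table K L T ap a_s bp bs ->
     K * L + K + L + 2 * T - 1 - T * minn K (minn L T)
       <= Nsum (ap ++ a_s) (bp ++ bs)) /\
  (degree_table K L 1 (iota 0 K) [:: K * L] [seq K * i | i <- iota 0 L] [:: K * L] /\
   forall ap a_s bp bs : seq nat, degree_table K L 1 ap a_s bp bs ->
     Nsum (iota 0 K ++ [:: K * L]) ([seq K * i | i <- iota 0 L] ++ [:: K * L])
       <= Nsum (ap ++ a_s) (bp ++ bs)).
Proof.
split; first by move=> T ap a_s bp bs; apply: Nsum_degree_table_lb.
split; first exact: standard_degree_table.
move=> ap a_s bp bs table.
apply: leq_trans (Nsum_standard_table hK hL) _.
by have := Nsum_degree_table_lb (ltn0Sn 0) table; lia.
Qed.
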